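(* Consider $k$ agents in a multi-agent environment $\phi$ controlled by the VCG mechanism with Clark pivot payments, with the interaction protocol, rational valuation functions and realisable cumulative utility as described in the context. Suppose each agent $i$'s true valuation function at each time $t$ is its rational valuation function $v_{t,i}(\overline{h_{t-1}},\cdot)$. Then the protocol is Bayes–Nash incentive compatible with respect to each agent's realisable cumulative utility at every time step: for every time $t$, every joint history $\overline{h_{t-1}}$, every agent $i$ and every function $\widetilde v_{t,i}:\mathcal{X}\to\mathbb{R}$, if all agents $j\neq i$ submit their true rational valuation functions $v_{t,j}(\overline{h_{t-1}},\cdot)$, then the expected realisable cumulative utility of agent $i$ (expectation over $\overline{or_t}\sim\phi(\cdot\mid \overline{h_{t-1}}\,\overline{a_t})$, where $\overline{a_t}$ is the joint action selected by the mechanism from the submitted functions) when it submits $v_{t,i}(\overline{h_{t-1}},\cdot)$ is at least as large as when it submits $\widetilde v_{t,i}$.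
   Context: Setting. There are $k$ agents; agent $i$ has finite action set $\mathcal{A}_i$, finite observation set $\mathcal{O}_i$ and finite reward set $\mathcal{R}\subset\mathbb{R}$. A joint action is $\overline{a}=(a_1,\dots,a_k)$ and a joint percept is $\overline{or}=(o_1r_1,\dots,o_kr_k)$; $r_{t,i}$ denotes agent $i$'s reward component of $\overline{or_t}$. A joint history is $\overline{h_{t}}=\overline{a_1}\,\overline{or_1}\cdots\overline{a_t}\,\overline{or_t}$ ($\overline{h_0}$ empty). The multi-agent environment $\phi$ gives conditional probabilities $\phi(\overline{or_t}\mid \overline{h_{t-1}}\,\overline{a_t})$ of the next joint percept. $\mathcal{X}$ is the set of admissible joint actions. Mechanism. Given submitted functions $\overline{v}=(v_1,\dots,v_k)$ with $v_j:\mathcal{X}\to\mathbb{R}$, the social choice is $f(\overline v)\in\arg\max_{\overline a\in\mathcal{X}}\sum_j v_j(\overline a)$ and agent $i$ pays $p_i(\overline v)=\max_{\overline a}\sum_{j\neq i}v_j(\overline a)-\sum_{j\neq i}v_j(f(\overline v))$. Protocol: at time $t$ each agent $i$ submits $v_{t,i}$, the joint action $\overline{a_t}=f(\overline{v_t})$ is executed, $\overline{or_t}\sim\phi(\cdot\mid\overline{h_{t-1}}\,\overline{a_t})$ is sampled, agent $i$ receives $or_{t,i}$ and is charged $p_i(\overline{v_t})$. Rational valuation functions (full knowledge of $\phi$ and the mechanism; agent $i$ has horizon $m_i$), defined by backward induction: $q_{t,i}(\overline{h_{t-1}},\overline{a_t})=0$ if $t>m_i$, else $\sum_{\overline{or_t}}\phi(\overline{or_t}\mid\overline{h_{t-1}}\,\overline{a_t})[r_{t,i}+\overline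 q_{t+1,i}(\overline{h_{t-1}}\,\overline{a_t}\,\overline{or_t})]$; $\overline q_{t,i}(\overline{h_{t-1}})=q_{t,i}(\overline{h_{t-1}},f(\overline{v_t}))$; $c_{t,i}(\overline{h_{t-1}},\overline{a_t})=0$ if $t\ge m_i$, else $\sum_{\overline{or_t}}\phi(\overline{or_t}\mid\overline{h_{t-1}}\,\overline{a_t})\,\overline c_{t+1,i}(\overline{h_{t-1}}\,\overline{a_t}\,\overline{or_t})$; $\overline c_{t,i}(\overline{h_{t-1}})=p_i(\overline{v_t})+c_{t,i}(\overline{h_{t-1}},f(\overline{v_t}))$; $v_{t,i}(\overline{h_{t-1}},\overline{a_t})=q_{t,i}(\overline{h_{t-1}},\overline{a_t})-c_{t,i}(\overline{h_{t-1}},\overline{a_t})$; here $\overline{v_t}=(v_{t,1}(\overline{h_{t-1}},\cdot),\dots,v_{t,k}(\overline{h_{t-1}},\cdot))$. Realisable cumulative utility. Given history $\overline{h_{t-1}}$, submitted functions $\overline{\widetilde v_t}$, joint action $\overline{a_t}=f(\overline{\widetilde v_t})$ and percept $\overline{or_t}\sim\phi(\cdot\mid\overline{h_{t-1}}\,\overline{a_t})$, agent $i$'s realisable cumulative utility at time $t$ is $r_{t,i}-p_i(\overline{\widetilde v_t})+\overline q_{t+1,i}(\overline{h_{t-1}}\,\overline{a_t}\,\overline{or_t})-\overline c_{t+1,i}(\overline{h_{t-1}}\,\overline{a_t}\,\overline{or_t})$. *)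

From mathcomp Require Import all_boot all_order all_algebra.
Set Implicit Arguments. Unset Strict Implicit. Unset Printing Implicit Defensive.
Import Order.TTheory GRing.Theory Num.Theory.
Local Open Scope ring_scope.

Section VCG.
Context {R : realFieldType} {k : nat} (A O : 'I_k -> finType) (Rw : finType).
(* rval : the finite reward set R (indexed by Rw) embedded in the reals *)
Variable rval : Rw -> R.

Definition jaction := {dffun forall i : 'I_k, A i}.
Definition jpercept := {dffun forall i : 'I_k, (O i * Rw)%type}.
(* joint history h_{t-1} = a_1 or_1 ... a_{t-1} or_{t-1}, in chronological
   order; h_{t-1} has size t-1, so the current time is t = size h + 1 *)
Definition history := seq (jaction * jpercept).
Definition reward (p : jpercept) (i : 'I_k) : R := rval (p i).2.
Definition profile := 'I_k -> jaction -> R.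

Variable X : {set jaction}.

Definition maxX (F : jaction -> R) : R :=
  if [pick a in X] is Some a0 then \big[Num.max/F a0]_(a in X) F a else 0.

Definition argmax_rule (f : profile -> jaction) : Prop :=
  forall v : profile, f v \in X /\
    (forall a, a \in X -> \sum_j v j a <= \sum_j v j (f v)).

Variable f : profile -> jaction.

Definition pay (v : profile) (i : 'I_k) : R :=
  maxX (fun a => \sum_(j | j != i) v j a) - \sum_(j | j != i) v j (f v).

Variable phi : history -> jaction -> jpercept -> R.
Variable m : 'I_k -> nat.

(* Backward induction with fuel n; returns (q_{t,i}(h,a), c_{t,i}(h,a))
   where t = size h + 1. *)
Fixpoint qc (n : nat) (h : history) (i : 'I_k) (a : jaction) : R * R :=
  match n with
  | 0 => (0, 0)
  | n'.+1 =>
    let t := (size h).+1 in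
    let next o := rcons h (a, o) in
    let vn h' : profile := fun j b => (qc n' h' j b).1 - (qc n' h' j b).2 in
    ((if (m i < t)%N then 0 else
        \sum_o phi h a o * (reward o i + (qc n' (next o) i (f (vn (next o)))).1)),
     (if (m i <= t)%N then 0 else
        \sum_o phi h a o * (pay (vn (next o)) i + (qc n' (next o) i (f (vn (next o)))).2)))
  end.

(* enough fuel: after horizonM - size h steps all times exceed every horizon *)
Definition horizonM : nat := \max_i m i.

Definition qval (h : history) (i : 'I_k) (a : jaction) : R :=
  (qc (horizonM - size h) h i a).1.
Definition cval (h : history) (i : 'I_k) (a : jaction) : R :=
  (qc (horizonM - size h) h i a).2.
Definition rvals (h : history) : profile := fun i a => qval h i a - cval h i a.
Definition qbar (h : history) (i : 'I_k) : R := qval h i (f (rvals h)).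
Definition cbar (h : history) (i : 'I_k) : R :=
  pay (rvals h) i + cval h i (f (rvals h)).

Definition rcu (h : history) (vs : profile) (i : 'I_k) (o : jpercept) : R :=
  let a := f vs in
  reward o i - pay vs i + qbar (rcons h (a, o)) i - cbar (rcons h (a, o)) i.

Definition exp_rcu (h : history) (vs : profile) (i : 'I_k) : R :=
  \sum_o phi h (f vs) o * rcu h vs i o.

End VCG.

From mathcomp Require Import all_boot all_order all_algebra.
From mathcomp Require Import zify ring lra.
Import Order.TTheory GRing.Theory Num.Theory.
Local Open Scope ring_scope.

(** Unfolding the backward induction one step, agent i's expected realisable
    cumulative utility after submitting a profile [vs] is exactly
    [v_{t,i}(h, f vs) - p_i(vs)]: the rewards and payments expected from time
    [t+1] on are what [q_{t,i}] and [c_{t,i}] account for.  The claim is then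
    the classical truthfulness of VCG with Clarke pivot payments, applied to the
    one-shot valuations [v_{t,j}(h, .)]. *)

Section ClarkePivot.
Context {R : realFieldType} {k : nat} (A : 'I_k -> finType).
Variable X : {set jaction A}.
Variable f : profile (R:=R) A -> jaction A.
Hypothesis f_argmax : argmax_rule X f.

Local Notation pay := (pay X f).

Lemma eq_maxX {F G : jaction A -> R} : F =1 G -> maxX X F = maxX X G.
Proof.
move=> FG; rewrite /maxX; case: pickP => // a0 _.
by rewrite FG; apply: eq_bigr => a _.
Qed.

Lemma pay_eq0 (v : profile A) i : v i =1 (fun=> 0) -> pay v i = 0.
Proof.
move=> vi0; have [fvX fv_max] := f_argmax v.
have others a : \sum_(j | j != i) v j a = \sum_j v j a.
  by rewrite [RHS](bigD1 i) //= vi0 add0r.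
rewrite /pay /maxX; case: pickP => [a0 a0X|noX]; last first.
  by have := noX (f v); rewrite fvX.
apply/eqP; rewrite subr_eq0; apply/eqP/le_anti/andP; split.
  by apply: bigmax_le => [|a aX]; rewrite !others fv_max.
exact: (le_bigmax_cond _ (P := fun a => a \in X)).
Qed.

Lemma vcg_truthful (v w : profile A) i :
    (forall j, j != i -> w j = v j) ->
  v i (f w) - pay w i <= v i (f v) - pay v i.
Proof.
move=> wv.
have others_eq a : \sum_(j | j != i) w j a = \sum_(j | j != i) v j a.
  by apply: eq_bigr => j /wv ->.
rewrite /pay others_eq (eq_maxX others_eq).
have [fwX _] := f_argmax w; have [_ fv_max] := f_argmax v.
have := fv_max _ fwX; rewrite (bigD1 i) //= [X in _ <= X](bigD1 i) //=.
lra.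
Qed.

End ClarkePivot.

Section RationalValuations.
Context {R : realFieldType} {k : nat} (A O : 'I_k -> finType) (Rw : finType).
Variable rval : Rw -> R.
Variable X : {set jaction A}.
Variable f : profile (R:=R) A -> jaction A.
Variable phi : history A O Rw -> jaction A -> jpercept O Rw -> R.
Variable m : 'I_k -> nat.
Hypothesis f_argmax : argmax_rule X f.
Hypothesis phi_sum1 : forall h a, \sum_o phi h a o = 1.
Implicit Types h : history A O Rw.

Local Notation qval := (qval rval X f phi m).
Local Notation cval := (cval rval X f phi m).
Local Notation rvals := (rvals rval X f phi m).
Local Notation qbar := (qbar rval X f phi m).
Local Notation cbar := (cbar rval X f phi m).

Lemma qval_after_horizon h i a : (m i <= size h)%N -> qval h i a = 0.
Proof. by move=> hi; rewrite /qval; case: (_ - _)%N => //= n; rewrite ltnS hi. Qed.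

Lemma cval_after_horizon h i a : (m i <= (size h).+1)%N -> cval h i a = 0.
Proof. by move=> hi; rewrite /cval; case: (_ - _)%N => //= n; rewrite hi. Qed.

Lemma cbar_after_horizon h i : (m i <= size h)%N -> cbar h i = 0.
Proof.
move=> hi; rewrite /cbar cval_after_horizon ?addr0; last exact: leqW.
apply: pay_eq0 => // a.
by rewrite /rvals qval_after_horizon ?cval_after_horizon ?subr0 //; lia.
Qed.

Lemma fuel_succ {h i} : (size h < m i)%N ->
  (horizonM m - size h = (horizonM m - (size h).+1).+1)%N.
Proof. by have : (m i <= horizonM m)%N := leq_bigmax i; lia. Qed.

Lemma qvalE h i a : (size h < m i)%N ->
  qval h i a = \sum_o phi h a o * (reward rval o i + qbar (rcons h (a, o)) i).
Proof.
move=> hi; rewrite {1}/qval (fuel_succ hi) /= ifF; last by lia.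
by apply: eq_bigr => o _; rewrite /qbar /rvals /qval /cval size_rcons.
Qed.

(* At [t = m_i] the definition sets [c_{t,i} = 0] directly; the right-hand side
   vanishes too, since beyond its horizon agent i's valuation is zero and a
   null agent pays nothing. *)
Lemma cvalE h i a : (size h < m i)%N ->
  cval h i a = \sum_o phi h a o * cbar (rcons h (a, o)) i.
Proof.
move=> hi; have [hi_next|hi_last] := ltnP (size h).+1 (m i).
  rewrite {1}/cval (fuel_succ hi) /= ifF; last by lia.
  by apply: eq_bigr => o _; rewrite /cbar /rvals /qval /cval size_rcons.
rewrite cval_after_horizon // big1 // => o _.
by rewrite cbar_after_horizon ?mulr0 // size_rcons.
Qed.

Lemma exp_rcuE h vs i : (size h < m i)%N ->
  exp_rcu rval X f phi m h vs i = rvals h i (f vs) - pay X f vs i.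
Proof.
move=> hi; rewrite /exp_rcu /rcu /rvals qvalE // cvalE //.
move: (pay X f vs i) => p.
have regroup (x z w : R) : x - p + z - w = x + z - w - p by ring.
under eq_bigr => o _ do rewrite regroup !mulrBr.
by rewrite !sumrB -mulr_suml phi_sum1 mul1r.
Qed.

End RationalValuations.

Theorem corollary1 (R : realFieldType) (k : nat) (A O : 'I_k -> finType)
  (Rw : finType) (rval : Rw -> R) (X : {set jaction A})
  (f : profile (R:=R) A -> jaction A)
  (phi : history A O Rw -> jaction A -> jpercept O Rw -> R)
  (m : 'I_k -> nat) :
  argmax_rule X f ->
  (forall h a o, 0 <= phi h a o) ->
  (forall h a, \sum_o phi h a o = 1) ->
  forall (h : history A O Rw) (i : 'I_k) (vt : jaction A -> R),
    (size h < m i)%N ->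
    exp_rcu rval X f phi m h
      (fun j => if j == i then vt else rvals rval X f phi m h j) i
    <= exp_rcu rval X f phi m h (rvals rval X f phi m h) i.
Proof.
move=> f_argmax _ phi_sum1 h i vt hi.
by rewrite !exp_rcuE //; apply: vcg_truthful => // j /negbTE ->.
Qed.
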